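(* (Extinction-explosion principle.) For the branching-within-branching process described in the context, the parasite population either dies out or explodes: for every $\vec{s}\in\mathbf{N}$, $$\mathbb{P}_{\vec s}(\mathcal{Z}_n\to0)+\mathbb{P}_{\vec s}(\mathcal{Z}_n\to\infty)=1.$$
   Context: Branching-within-branching process (BwBP): Let $\mathbb{V}$ be the Ulam-Harris tree with root $\varnothing$. Let $(N_\mathsf{v})_{\mathsf{v}\in\mathbb{V}}$ be i.i.d. copies of an $\mathbb{N}_0$-valued random variable $N$ with law $(p_k)_{k\ge0}$ and finite mean $\nu=\mathbb{E}N$; each cell $\mathsf{v}$ has $N_\mathsf{v}$ daughter cells $\mathsf{v}1,\dots,\mathsf{v}N_\mathsf{v}$, giving a Galton-Watson cell tree with generations $\mathbb{T}_n$. For each $k\in\mathbb{N}$ let $X^{(\bullet,k)}=(X^{(1,k)},\dots,X^{(k,k)})$ be an $\mathbb{N}_0^k$-valued random vector and $X^{(\bullet,k)}_{i,\mathsf{v}}$ i.i.d. copies, independent over $k$ and of $(N_\mathsf{v})$; $X^{(j,k)}_{i,\mathsf{v}}:=0$ for $j>k$. If cell $\mathsf{v}$ contains $Z_\mathsf{v}$ parasites, daughter $\mathsf{v}j$ contains $Z_{\mathsf{v}j}=\sum_{i=1}^{Z_\mathsf{v}}X^{(j,N_\mathsf{v})}_{i,\mathsf{v}}$ parasites ($X^{(j,k)}_{i,\mathsf{v}}$ is the offspring of the $i$-th parasite of $\mathsf{v}$ going to the $j$-th daughter when there are $k$ daughters). Cells in one generation with their parasites evolve independently. $\mathcal{Z}_n=\sum_{\mathsf{v}\in\mathbb{T}_n}Z_\mathsf{v}$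 is the total number of parasites in generation $n$. Put $\mu_{j,k}=\mathbb{E}X^{(j,k)}$, $\gamma=\sum_{k\ge1}p_k\sum_{j=1}^k\mu_{j,k}$. Standing assumptions: $0<\gamma<\infty$; $p_1<1$ and, starting from one cell with one parasite, $\mathbb{P}(\mathcal{Z}_1=1)<1$; $p_k\,\mathbb{P}(X^{(j,k)}\ge2)>0$ for at least one pair $1\le j\le k$. $\mathbf{N}=\{(x_i)_{i\ge0}\in\mathbb{N}_0^\infty: x_i>0\text{ for only finitely many }i\}$, and for $\vec s=(s_0,s_1,\dots)\in\mathbf{N}$, $\mathbb{P}_{\vec s}$ denotes the law of the process started with $s_k$ cells containing exactly $k$ parasites, for each $k\ge0$. *)

From HB Require Import structures.
From mathcomp Require Import all_boot all_order all_algebra.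
From mathcomp Require Import all_classical all_reals all_analysis.
Set Implicit Arguments. Unset Strict Implicit. Unset Printing Implicit Defensive.
Import Order.TTheory GRing.Theory Num.Theory.
Local Open Scope classical_set_scope.
Local Open Scope ring_scope.

(* Cells are Ulam-Harris words, stored REVERSED: the root cells of the
   initial generation are [:: i] (i-th initial cell), and the j-th daughter
   (0-indexed, i.e. the paper's (j+1)-th daughter) of cell v is j :: v.
   N v : number of daughters of cell v.
   X k i v : the offspring vector X^{(.,k)}_{i,v} of parasite i (0-indexed)
   of cell v when there are k daughters; its j-th component (0-indexed)
   is the number of offspring going to daughter j. *)

(* j-th component of a k-vector, with the convention X^{(j,k)} = 0 for j >= k *)
Definition xcomp (k : nat) (x : {ffun 'I_k -> nat}) (j : nat) : nat :=
  oapp x 0%N (insub j : option 'I_k).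

(* initial cell contents for a start vector s : s`_k cells with k parasites *)
Definition init_counts (s : seq nat) : seq nat :=
  flatten [seq nseq (nth 0%N s k) k | k <- iota 0 (size s)].

Section Process.
Variables (T : Type) (N : seq nat -> T -> nat)
  (X : forall k : nat, nat -> seq nat -> T -> {ffun 'I_k -> nat}).

(* generation n : list of (cell, number of parasites in that cell) *)
Fixpoint gen (s : seq nat) (n : nat) (w : T) : seq (seq nat * nat) :=
  match n with
  | 0 => [seq ([:: i], nth 0%N (init_counts s) i) | i <- iota 0 (size (init_counts s))]
  | n'.+1 =>
      flatten [seq [seq (j :: vz.1,
                         (\sum_(i < vz.2) xcomp (X (N vz.1 w) i vz.1 w) j)%N)
                   | j <- iota 0 (N vz.1 w)]
              | vz <- gen s n' w]
  end.

Definition calZ (s : seq nat) (n : nat) (w : T) : nat :=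
  sumn [seq vz.2 | vz <- gen s n w].
End Process.

Definition tends_to_zero (u : nat -> nat) : Prop :=
  exists n0, forall n, (n0 <= n)%N -> u n = 0%N.

Definition tends_to_infty (u : nat -> nat) : Prop :=
  forall M, exists n0, forall n, (n0 <= n)%N -> (M <= u n)%N.

Section Assumptions.
Context {d : measure_display} {T : measurableType d} {R : realType}.
Variables (P : probability T R) (N : seq nat -> T -> nat)
  (X : forall k : nat, nat -> seq nat -> T -> {ffun 'I_k -> nat}).

Definition bwbp_measurable : Prop :=
  (forall v n, measurable [set w | N v w = n]) /\
  (forall k i v x, measurable [set w | X k i v w = x]).

Definition bwbp_independent : Prop :=
  forall (V : seq (seq nat)) (W : seq (nat * nat * seq nat))
    (a : seq nat -> nat) (b : forall k : nat, nat -> seq nat -> {ffun 'I_k -> nat}),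
    uniq V -> uniq W ->
    P [set w | all (fun v => N v w == a v) V &&
               all (fun t => X t.1.1 t.1.2 t.2 w == b t.1.1 t.1.2 t.2) W] =
    ((\prod_(v <- V) fine (P [set w | N v w = a v])) *
     (\prod_(t <- W) fine (P [set w | X t.1.1 t.1.2 t.2 w = b t.1.1 t.1.2 t.2])))%:E.

Definition bwbp_identically_distributed : Prop :=
  (forall v n, P [set w | N v w = n] = P [set w | N [::] w = n]) /\
  (forall k i v x, P [set w | X k i v w = x] = P [set w | X k 0%N [::] w = x]).

Definition pk (k : nat) : \bar R := P [set w | N [::] w = k].

Definition nu : \bar R := (\sum_(0 <= k <oo) ((k%:R)%:E * pk k))%E.

(* mu_{j,k} = E X^{(j,k)}  (j 0-indexed) *)
Definition mu (j k : nat) : \bar R :=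
  (\sum_(0 <= n <oo) ((n%:R)%:E * P [set w | xcomp (X k 0%N [::] w) j = n]))%E.

Definition gamma : \bar R :=
  (\sum_(1 <= k <oo) (pk k * \sum_(j < k) mu j k))%E.

Definition bwbp_standing : Prop :=
  [/\ (nu < +oo)%E,
      (0 < gamma)%E /\ (gamma < +oo)%E,
      (pk 1 < 1)%E,
      (P [set w | calZ N X [:: 0%N; 1%N] 1 w = 1%N] < 1)%E &
      exists k j, (j < k)%N /\
        (0 < pk k * P [set w | (2 <= xcomp (X k 0%N [::] w) j)%N])%E].
End Assumptions.

(* Zero is absorbing, so on the event that the parasites neither die out nor
   explode some level m > 0 is visited infinitely often, and it suffices to
   show that this has probability zero.  Choose a number k of daughters and an
   offspring vector x with p = P(N = k) P(X^(.,k) = x) > 0: take x = 0 if this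
   is possible for some k, and otherwise an x sending at least two parasites
   to one daughter, which the standing assumptions provide; let S be the
   total offspring of x.  By independence, whatever happened before, a visit
   to m is followed by generation size m S with probability at least p^m (all
   occupied cells draw k daughters and all parasites draw x).  Decomposing by
   the first visit to m after time n0 gives
     p^m P(m visited infinitely often) <= P(a jump m -> m S after n0)
   for every n0.  These events decrease in n0 and their intersection is null:
   if x = 0 the process cannot return to m after a jump to 0; otherwise almost
   surely no parasite ever has zero offspring, so the generation sizes are
   nondecreasing and cannot return to m after reaching m S >= 2 m. *)

From HB Require Import structures.
From mathcomp Require Import all_boot all_order all_algebra.
From mathcomp Require Import all_classical all_reals all_analysis.
From mathcomp Require Import zify.
Set Implicit Arguments. Unset Strict Implicit. Unset Printing Implicit Defensive.
Import Order.TTheory GRing.Theory Num.Theory.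
Local Open Scope classical_set_scope.
Local Open Scope ring_scope.

Local Notation record := (seq nat * nat * seq (seq nat))%type.

Definition infinitely_often (E : nat -> Prop) : Prop :=
  forall n0, exists2 n, (n0 <= n)%N & E n.

Lemma infinitely_often_ltS (u : nat -> nat) M :
  infinitely_often (fun n => u n < M.+1)%N ->
  infinitely_often (fun n => u n = M) \/ infinitely_often (fun n => u n < M)%N.
Proof.
move=> io_lt; have [|/existsNP [b noM]] := pselect (infinitely_often (fun n => u n = M)).
  by left.
right=> n0; have [n le_n lt_uM] := io_lt (maxn n0 b).
exists n; first exact: leq_trans (leq_maxl _ _) le_n.
rewrite ltnS leq_eqVlt in lt_uM; case/orP: lt_uM => // /eqP uM.
by case: noM; exists n; rewrite // (leq_trans (leq_maxr _ _) le_n).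
Qed.

Lemma infinitely_often_value (u : nat -> nat) M :
  infinitely_often (fun n => u n < M)%N ->
  exists2 m, (m < M)%N & infinitely_often (fun n => u n = m).
Proof.
elim: M => [io_lt|M IH /infinitely_often_ltS [io_M|/IH [m lt_mM io_m]]].
- by have [n _] := io_lt 0%N.
- by exists M.
- by exists m => //; apply: ltnW.
Qed.

Section Absorbed.
Variable u : nat -> nat.
Hypothesis u_absorbed : forall n, u n = 0%N -> u n.+1 = 0%N.

Lemma absorbed_tends_to_zero : tends_to_zero u <-> exists n, u n = 0%N.
Proof.
split=> [[n u0]|[n un0]]; first by exists n; apply: u0.
exists n => k /subnKC <-; elim: (k - n)%N => [|j IH]; first by rewrite addn0.
by rewrite addnS; apply: u_absorbed.
Qed.

Lemma recurrent_of_not_tends : ~ tends_to_zero u -> ~ tends_to_infty u ->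
  exists m, infinitely_often (fun n => u n = m.+1).
Proof.
move=> not0 /existsNP [M /forallNP small].
have io_lt : infinitely_often (fun n => u n < M)%N.
  move=> n0; have /existsNP [n /not_implyP [le_n /negP]] := small n0.
  by rewrite -ltnNge; exists n.
have [[|m] _ io_m] := infinitely_often_value io_lt; last by exists m.
by case: not0; apply/absorbed_tends_to_zero; have [n _ un0] := io_m 0%N; exists n.
Qed.

End Absorbed.

Definition ffun_of_seq k (l : seq nat) : {ffun 'I_k -> nat} :=
  [ffun j : 'I_k => nth 0%N l j].

Lemma codomK k (f : {ffun 'I_k -> nat}) : ffun_of_seq k (codom f) = f.
Proof.
apply/ffunP => j; rewrite ffunE codomE (nth_map j) ?size_enum_ord //.
by rewrite nth_ord_enum.
Qed.

Lemma leq_mem_sumn (l : seq nat) x : x \in l -> (x <= sumn l)%N.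
Proof.
elim: l => [|y l IH] //=; rewrite in_cons => /orP [/eqP ->|/IH]; first exact: leq_addr.
by move/leq_trans; apply; apply: leq_addl.
Qed.

Definition offspring_total k (x : {ffun 'I_k -> nat}) : nat :=
  sumn [seq xcomp x j | j <- iota 0 k].

Lemma offspring_total0 k : offspring_total ([ffun => 0%N] : {ffun 'I_k -> nat}) = 0%N.
Proof.
rewrite /offspring_total; elim: (iota 0 k) => //= j l ->.
by rewrite /xcomp; case: insub => //= a; rewrite ffunE.
Qed.

Lemma offspring_total_gt0 k (x : {ffun 'I_k -> nat}) : x != [ffun => 0%N] ->
  (0 < offspring_total x)%N.
Proof.
move=> x_neq0; have [j0 xj0_neq0] : exists j0, x j0 != 0%N.
  apply/existsP; apply: contraR x_neq0 => /existsPn x0; apply/eqP/ffunP => j.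
  by rewrite ffunE; apply/eqP; move: (x0 j); rewrite negbK.
apply: (leq_trans _ (leq_mem_sumn (x := xcomp x j0) _)); first by rewrite /xcomp valK lt0n.
by apply: map_f; rewrite mem_iota ltn_ord.
Qed.

Lemma prod_pos_ge_expr_sumn (R : numDomainType) (p q : R) (l : seq nat) :
  0 <= p <= 1 -> 0 <= q -> (p * q) ^+ sumn l <= \prod_(z <- l | (0 < z)%N) (p * q ^+ z).
Proof.
move=> /andP [p_ge0 p_le1] q_ge0; elim: l => [|z l IH]; first by rewrite big_nil expr0.
rewrite big_cons /= exprD; case: posnP => [->|z_gt0]; first by rewrite expr0 mul1r.
apply: ler_pM => //; rewrite ?exprn_ge0 ?mulr_ge0 // exprMn.
apply: ler_pM; rewrite ?exprn_ge0 //.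
by case: z z_gt0 => // z _; rewrite exprS ler_piMr // exprn_ile1.
Qed.

Lemma bigcup_pickle (I : countType) U (F : I -> set U) :
  \bigcup_i F i = \bigcup_n oapp F set0 (unpickle n).
Proof.
apply/seteqP; split=> [w [i _ Fiw]|w [n _]]; first by exists (pickle i); rewrite ?pickleK.
by case: unpickle => //= i Fiw; exists i.
Qed.

Section MeasureFacts.
Context d (T : measurableType d) (R : realType) (P : probability T R).

Lemma negligible_bigcup_countable (I : countType) (F : I -> set T) :
  (forall i, P.-negligible (F i)) -> P.-negligible (\bigcup_i F i).
Proof.
move=> negF; rewrite bigcup_pickle; apply: negligible_bigcup => n.
by case: unpickle => [i|] /=; [exact: negF | exact: negligible_set0].
Qed.

Lemma exists_atom_gt0 (C : countType) (f : T -> C) (Q : pred C) :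
  (forall c, measurable [set w | f w = c]) ->
  (0 < P [set w | Q (f w)])%E -> exists2 c, Q c & (0 < P [set w | f w = c])%E.
Proof.
move=> mf; apply: contraPP => noatom.
pose F c := if Q c then [set w | f w = c] else set0.
have -> : [set w | Q (f w)] = \bigcup_c F c.
  apply/seteqP; split=> [w Qw|w [c _]]; first by exists (f w); rewrite /F ?Qw.
  by rewrite /F; case: ifP => // Qc /= ->.
have mF : measurable (\bigcup_c F c).
  apply: countable_bigcupT_measurable; first exact: countableP.
  by move=> c; rewrite /F; case: ifP.
rewrite (measure_negligible mF) ?ltxx //; apply: negligible_bigcup_countable => c.
rewrite /F; case: ifP => Qc; last exact: negligible_set0.
apply/negligibleP => //; apply/eqP; rewrite eq_le measure_ge0 andbT leNgt.
by apply/negP => pos; apply: noatom; exists c.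
Qed.

Lemma probability_disjointU_eq1 (A B : set T) : measurable A -> measurable B ->
  A `&` B = set0 -> P (~` (A `|` B)) = 0%E -> (P A + P B = 1)%E.
Proof.
move=> mA mB AB0 null; have mAB := measurableU _ _ mA mB.
rewrite -measureU // -[RHS](probability_setT P) -(setUv (A `|` B)).
rewrite [RHS]measureU //; [|exact: measurableC|exact: setICr].
by rewrite -[LHS]adde0; congr (_ + _); exact: esym null.
Qed.

Lemma fine_probability_le1 A : measurable A -> fine (P A) <= 1.
Proof.
move=> mA; rewrite -[1]/(fine 1%E) fine_le //; last exact: probability_le1.
by rewrite ge0_fin_numE // (le_lt_trans (probability_le1 P mA)) // ltry.
Qed.

Lemma le_measure_bigcup_scale
  (mu : {measure set T -> \bar R}) (c : R) (F G : (set T)^nat) :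
  0 <= c -> (forall i, measurable (F i)) -> (forall i, measurable (G i)) ->
  trivIset setT F -> trivIset setT G -> (forall i, c%:E * mu (F i) <= mu (G i))%E ->
  (c%:E * mu (\bigcup_i F i) <= mu (\bigcup_i G i))%E.
Proof.
move=> c_ge0 mF mG tF tG FG.
rewrite !measure_semi_bigcup //; try exact: bigcupT_measurable.
by rewrite -nneseriesZl //; apply: lee_nneseries => // i _ _; apply: mule_ge0.
Qed.

Lemma fine_probability_gt0 A : measurable A -> (0 < P A)%E -> 0 < fine (P A).
Proof.
by move=> mA PA_gt0; rewrite fine_gt0 // PA_gt0 (le_lt_trans (probability_le1 P mA)) ?ltry.
Qed.

End MeasureFacts.

Section History.
Variables (T : Type) (N : seq nat -> T -> nat)
  (X : forall k : nat, nat -> seq nat -> T -> {ffun 'I_k -> nat}) (s : seq nat).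

Local Notation G := (gen N X s).
Local Notation Z := (calZ N X s).
(* A record [(v, k, xs)] says that cell [v] has [k] daughters and that its
   parasites have the offspring vectors [xs]; these are stored as sequences so
   that the records of all cells live in one countable type. *)
Definition record_of (w : T) (vz : seq nat * nat) : record :=
  (vz.1, N vz.1 w, [seq codom (X (N vz.1 w) i vz.1 w) | i <- iota 0 vz.2]).

Definition history n w : seq record :=
  flatten [seq map (record_of w) (G k w) | k <- iota 0 n].

Definition agrees (h : seq record) (w : T) : Prop :=
  forall e, e \in h -> N e.1.1 w = e.1.2 /\
    forall i, (i < size e.2)%N -> X e.1.2 i e.1.1 w = ffun_of_seq e.1.2 (nth [::] e.2 i).

Lemma agrees_cat h1 h2 : agrees (h1 ++ h2) = agrees h1 `&` agrees h2.
Proof.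
apply/seteqP; split=> [w agr|w [agr1 agr2] e].
  by split=> e e_in; apply: agr; rewrite mem_cat e_in ?orbT.
by rewrite mem_cat => /orP [/agr1|/agr2].
Qed.

Lemma genS k w : G k.+1 w =
  flatten [seq [seq (j :: vz.1, (\sum_(i < vz.2) xcomp (X (N vz.1 w) i vz.1 w) j)%N)
               | j <- iota 0 (N vz.1 w)] | vz <- G k w].
Proof. by []. Qed.

Lemma mem_history n w k vz : (k < n)%N -> vz \in G k w -> record_of w vz \in history n w.
Proof.
move=> lt_kn vz_in; apply/flattenP; exists (map (record_of w) (G k w)); last exact: map_f.
by apply: map_f; rewrite mem_iota.
Qed.

Lemma agrees_history n w : agrees (history n w) w.
Proof.
move=> e /flattenP [l /mapP [k _ ->]] /mapP [vz _ ->] /=; split => // i.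
rewrite size_map size_iota => lt_iz.
by rewrite (nth_map 0%N) ?size_iota // nth_iota // add0n codomK.
Qed.

Lemma agrees_history_gen n w w0 k vz : agrees (history n w0) w ->
  (k < n)%N -> vz \in G k w0 ->
  N vz.1 w = N vz.1 w0 /\
  forall i, (i < vz.2)%N -> X (N vz.1 w0) i vz.1 w = X (N vz.1 w0) i vz.1 w0.
Proof.
move=> agr lt_kn vz_in; have [/= -> HX] := agr _ (mem_history lt_kn vz_in).
split=> // i lt_iz; rewrite HX ?size_map ?size_iota //.
by rewrite (nth_map 0%N) ?size_iota // nth_iota // add0n codomK.
Qed.

Lemma gen_agrees n w w0 k : agrees (history n w0) w -> (k <= n)%N -> G k w = G k w0.
Proof.
move=> agr; elim: k => [|k IH] lt_kn; first by rewrite /gen; reflexivity.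
rewrite !genS IH; last exact: ltnW.
congr flatten; apply/eq_in_map => vz vz_in.
have [-> HX] := agrees_history_gen agr lt_kn vz_in.
by apply: eq_map => j; congr pair; apply: eq_bigr => i _; rewrite HX.
Qed.

Lemma agrees_historyP n w w0 : agrees (history n w0) w <-> history n w = history n w0.
Proof.
split=> [agr|<-]; last exact: agrees_history.
congr flatten; apply/eq_in_map => k; rewrite mem_iota add0n => /andP [_ lt_kn].
rewrite (gen_agrees agr (ltnW lt_kn)); apply/eq_in_map => vz vz_in.
have [HN HX] := agrees_history_gen agr lt_kn vz_in.
rewrite /record_of HN; congr (_, _, _); apply/eq_in_map => i.
by rewrite mem_iota add0n => /andP [_ lt_iz]; rewrite HX.
Qed.

Lemma calZ_history n w w0 k : history n w = history n w0 -> (k <= n)%N -> Z k w = Z k w0.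
Proof. by move=> /agrees_historyP agr le_kn; rewrite /calZ (gen_agrees agr le_kn). Qed.

Lemma gen_cells_uniq k w :
  uniq (map fst (G k w)) /\ all (fun v => size v == k.+1) (map fst (G k w)).
Proof.
elim: k => [|k [uniq_k size_k]].
  rewrite /gen -map_comp; split; last by apply/allP => v /mapP [i _ ->].
  by rewrite (map_inj_uniq (f := fun i => [:: i])) ?iota_uniq // => i j [].
have -> : map fst (G k.+1 w) = [seq j :: v | v <- map fst (G k w), j <- iota 0 (N v w)].
  rewrite genS map_flatten -!map_comp; congr flatten; apply/eq_map => vz /=.
  by rewrite -map_comp.
split.
  apply: allpairs_uniq_dep => // [v _|]; first exact: iota_uniq.
  by move=> [v1 j1] [v2 j2] _ _ /= [-> ->].
apply/allP => u /flattenP [l /mapP [v v_in ->]] /mapP [j _ ->] /=.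
by rewrite eqSS; apply: (allP size_k).
Qed.

Lemma history_cells_uniq n w : uniq (map (fun e => e.1.1) (history n w)) /\
  all (fun v => size v <= n)%N (map (fun e => e.1.1) (history n w)).
Proof.
have -> : map (fun e => e.1.1) (history n w) = flatten [seq map fst (G k w) | k <- iota 0 n].
  by rewrite map_flatten -map_comp; congr flatten; apply/eq_map => k /=; rewrite -map_comp.
elim: n => [|n [uniq_n size_n]]; first by [].
rewrite -addn1 iotaD map_cat flatten_cat /= cats0 add0n.
have [uniq_g size_g] := gen_cells_uniq n w.
split.
  rewrite cat_uniq uniq_n uniq_g andbT /=; apply/hasPn => v v_in.
  move/allP: size_g => /(_ v v_in) /eqP size_v; apply/negP => /(allP size_n).
  by rewrite size_v ltnn.
rewrite all_cat; apply/andP; split; apply/allP => v.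
  by move/(allP size_n)/leq_trans; apply; rewrite leq_addr.
by move/(allP size_g)/eqP ->; rewrite addn1.
Qed.

Lemma calZS n w : Z n.+1 w =
  sumn [seq sumn [seq (\sum_(i < vz.2) xcomp (X (N vz.1 w) i vz.1 w) j)%N
                 | j <- iota 0 (N vz.1 w)] | vz <- G n w].
Proof.
rewrite /calZ genS map_flatten sumn_flatten -!map_comp; congr sumn.
by apply: eq_map => vz /=; rewrite -map_comp.
Qed.

Lemma calZ_absorbed w : forall n, Z n w = 0%N -> Z n.+1 w = 0%N.
Proof.
move=> n; rewrite calZS /calZ; elim: (G n w) => [|vz l IH] //=.
move/eqP; rewrite addn_eq0 => /andP [/eqP vz0 /eqP /IH ->]; rewrite addn0.
by elim: (iota _ _) => //= j r ->; rewrite vz0 big_ord0.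
Qed.

Lemma calZ_leS n w : (forall vz, vz \in G n w -> forall i, (i < vz.2)%N ->
    X (N vz.1 w) i vz.1 w != [ffun => 0%N]) -> (Z n w <= Z n.+1 w)%N.
Proof.
rewrite calZS /calZ; elim: (G n w) => [|vz l IH] nonzero //=.
apply: leq_add; last by apply: IH => u u_in; apply: nonzero; rewrite in_cons u_in orbT.
rewrite sumnE big_map exchange_big /= -[X in (X <= _)%N]card_ord -sum1_card.
apply: leq_sum => i _.
have := offspring_total_gt0 (nonzero vz (mem_head _ _) i (ltn_ord i)).
by rewrite /offspring_total sumnE big_map.
Qed.

End History.

Section BranchingWithinBranching.
Context d (T : measurableType d) (R : realType) (P : probability T R).
Variables (N : seq nat -> T -> nat)
  (X : forall k : nat, nat -> seq nat -> T -> {ffun 'I_k -> nat}) (s : seq nat).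
Hypotheses (N_X_meas : bwbp_measurable N X) (N_X_indep : bwbp_independent P N X)
  (N_X_ident : bwbp_identically_distributed P N X).

Local Notation G := (gen N X s).
Local Notation Z := (calZ N X s).
Local Notation history := (history N X s).
Local Notation agrees := (agrees N X).

Lemma measurable_agrees h : measurable (agrees h).
Proof.
have -> : agrees h = \bigcap_(e in [set` h]) ([set w | N e.1.1 w = e.1.2] `&`
    \bigcap_(i in [set` iota 0 (size e.2)])
      [set w | X e.1.2 i e.1.1 w = ffun_of_seq e.1.2 (nth [::] e.2 i)]).
  apply/seteqP; split=> w agr e /agr [HN HX]; split=> // i.
    by rewrite /= mem_iota => /andP [_]; apply: HX.
  by move=> lt_i; apply: HX; rewrite /= mem_iota.
rewrite bigcap_seq; apply: bigsetI_measurable => e _.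
apply: measurableI; first exact: N_X_meas.1.
by rewrite bigcap_seq; apply: bigsetI_measurable => i _; apply: N_X_meas.2.
Qed.

Definition determined n (E : set T) : Prop :=
  forall w w0, history n w = history n w0 -> E w0 -> E w.

Definition history_piece n (E : set T) (i : nat) : set T :=
  [set w | pickle (history n w) = i /\ E w].

Lemma history_pieceE n E i : determined n E -> history_piece n E i = set0 \/
  exists2 w0, E w0 & history_piece n E i = agrees (history n w0).
Proof.
move=> detE.
have [[w0 [h0 Ew0]]|none] := pselect (exists w0, pickle (history n w0) = i /\ E w0).
  right; exists w0 => //; apply/seteqP; split=> w.
    by move=> [hi _]; apply/agrees_historyP; apply: (pcan_inj pickleK); rewrite hi h0.
  by move/agrees_historyP=> hw; split; [rewrite hw | exact: detE hw Ew0].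
by left; apply/seteqP; split=> // w [hi Ew]; apply: none; exists w.
Qed.

Lemma history_piece_bigcup n E : E = \bigcup_i history_piece n E i.
Proof.
apply/seteqP; split=> [w Ew|w [i _ []] //].
by exists (pickle (history n w)).
Qed.

Lemma trivIset_history_piece n E : trivIset setT (history_piece n E).
Proof. by move=> i j _ _ [w [[<- _] [<- _]]]. Qed.

Lemma measurable_history_piece n E i : determined n E -> measurable (history_piece n E i).
Proof.
case/(history_pieceE i) => [->|[w0 _ ->]]; [exact: measurable0 | exact: measurable_agrees].
Qed.

Lemma measurable_determined n E : determined n E -> measurable E.
Proof.
move=> detE; rewrite (history_piece_bigcup n E).
by apply: bigcupT_measurable => i; apply: measurable_history_piece.
Qed.

Lemma measurable_calZ n (Q : (nat -> nat) -> Prop) :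
  (forall u v, (forall k, (k <= n)%N -> u k = v k) -> Q v -> Q u) ->
  measurable [set w | Q (fun k => Z k w)].
Proof.
move=> Q_loc; apply: (@measurable_determined n) => w w0 hw.
by apply: Q_loc => k; apply: calZ_history hw.
Qed.

Lemma measurable_calZ_eq n m : measurable [set w | Z n w = m].
Proof. by apply: (measurable_calZ (Q := fun u => u n = m)) => u v uv; rewrite uv. Qed.

Definition record_prob (e : record) : R :=
  fine (P [set w | N e.1.1 w = e.1.2]) *
  \prod_(i <- iota 0 (size e.2))
    fine (P [set w | X e.1.2 i e.1.1 w = ffun_of_seq e.1.2 (nth [::] e.2 i)]).

Lemma record_prob_ge0 e : 0 <= record_prob e.
Proof. by rewrite mulr_ge0 ?fine_ge0 // prodr_ge0 // => i _; rewrite fine_ge0. Qed.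

(* [look v] is the record of cell [v]; it turns the (duplicate-free) records
   into the functions [a] and [b] that [bwbp_independent] expects. *)
Lemma prob_agrees h : uniq (map (fun e => e.1.1) h) ->
  P (agrees h) = (\prod_(e <- h) record_prob e)%:E.
Proof.
move=> h_uniq; pose look v := nth ([::], 0%N, [::]) h (index v (map (fun e => e.1.1) h)).
have lookE e : e \in h -> look e.1.1 = e.
  move=> e_in; rewrite /look (_ : e.1.1 = nth [::] (map (fun e => e.1.1) h) (index e h)).
    by rewrite index_uniq ?size_map ?index_mem // nth_index.
  by rewrite (nth_map ([::], 0%N, [::])) ?index_mem // nth_index.
pose a v := (look v).1.2.
pose b k i v := ffun_of_seq k (nth [::] (look v).2 i).
pose W := [seq (e.1.2, i, e.1.1) | e <- h, i <- iota 0 (size e.2)].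
have W_uniq : uniq W.
  apply: allpairs_uniq_dep; [exact: map_uniq h_uniq | by move=> *; apply: iota_uniq |].
  move=> [e1 i1] [e2 i2] /allpairsPdep [x1 [j1 [x1_in _ [-> ->]]]].
  move=> /allpairsPdep [x2 [j2 [x2_in _ [-> ->]]]] [_ <- E12].
  by rewrite -(lookE x1) // -(lookE x2) // E12.
have -> : agrees h = [set w | all (fun v => N v w == a v) (map (fun e => e.1.1) h) &&
    all (fun t => X t.1.1 t.1.2 t.2 w == b t.1.1 t.1.2 t.2) W].
  apply/seteqP; split=> w.
    move=> agr; apply/andP; split; apply/allP.
      by move=> v /mapP [e e_in ->]; have [HN _] := agr e e_in; rewrite /a lookE // HN.
    move=> t /allpairsPdep [e [i [e_in i_in ->]]] /=.
    have [_ HX] := agr e e_in; rewrite /b lookE // HX //.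
    by move: i_in; rewrite mem_iota => /andP [].
  move=> /andP [/allP HV /allP HW] e e_in; split.
    by move/eqP: (HV _ (map_f _ e_in)); rewrite /a lookE.
  move=> i lt_i; have /HW/eqP -> : (e.1.2, i, e.1.1) \in W.
    by apply/allpairsPdep; exists e, i; rewrite mem_iota.
  by rewrite /b lookE.
rewrite (N_X_indep a b h_uniq W_uniq) big_map big_allpairs_dep -big_split /=.
congr EFin; apply: eq_big_seq => e e_in.
by rewrite /a /b lookE //; congr (_ * _); apply: eq_bigr => i _; rewrite lookE.
Qed.

Definition step_prob k (x : {ffun 'I_k -> nat}) : R :=
  fine (pk P N k) * fine (P [set w | X k 0%N [::] w = x]).

Lemma step_prob_ge0 k (x : {ffun 'I_k -> nat}) : 0 <= step_prob x.
Proof. by rewrite mulr_ge0 ?fine_ge0. Qed.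

Section UniformStep.
Variables (k1 : nat) (x1 : {ffun 'I_k1 -> nat}).

Definition uniform_step n w0 : seq record :=
  [seq (vz.1, k1, nseq vz.2 (codom x1)) | vz <- G n w0 & (0 < vz.2)%N].

Lemma uniq_history_uniform_step n w0 :
  uniq (map (fun e => e.1.1) (history n w0 ++ uniform_step n w0)).
Proof.
have [hist_uniq hist_size] := history_cells_uniq N X s n w0.
have [gen_uniq gen_size] := gen_cells_uniq N X s n w0.
have sub : subseq (map (fun e => e.1.1) (uniform_step n w0)) (map fst (G n w0)).
  by rewrite -map_comp; apply: map_subseq; apply: filter_subseq.
rewrite map_cat cat_uniq hist_uniq (subseq_uniq sub gen_uniq) andbT /=.
apply/hasPn => v /(mem_subseq sub) v_in; move/allP: gen_size => /(_ v v_in) /eqP size_v.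
by apply/negP => /(allP hist_size); rewrite size_v ltnn.
Qed.

Lemma prod_record_prob_uniform_step n w0 :
  \prod_(e <- uniform_step n w0) record_prob e =
  \prod_(z <- map snd (G n w0) | (0 < z)%N)
    (fine (pk P N k1) * fine (P [set w | X k1 0%N [::] w = x1]) ^+ z).
Proof.
rewrite [LHS]big_map big_filter [RHS]big_map; apply: eq_bigr => vz _.
rewrite /record_prob /= N_X_ident.1 size_nseq; congr (_ * _).
have -> (c : R) : c ^+ vz.2 = \prod_(i <- iota 0 vz.2) c.
  by rewrite big_const_seq count_predT size_iota iter_mulr_1.
apply: eq_big_seq => i; rewrite mem_iota => /andP [_ lt_i].
by rewrite nth_nseq lt_i codomK N_X_ident.2.
Qed.

Lemma calZ_uniform_step n w0 w : agrees (history n w0 ++ uniform_step n w0) w ->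
  Z n.+1 w = (Z n w0 * offspring_total x1)%N.
Proof.
rewrite agrees_cat => -[agr_hist agr_step].
rewrite calZS (gen_agrees agr_hist (leqnn n)) /calZ.
have step_in vz : vz \in G n w0 -> (0 < vz.2)%N ->
    (vz.1, k1, nseq vz.2 (codom x1)) \in uniform_step n w0.
  by move=> vz_in z_gt0; apply: map_f; rewrite mem_filter z_gt0.
elim: (G n w0) step_in => [|vz l IH] step_in //=.
rewrite mulnDl IH => [|u u_in]; last by apply: step_in; rewrite in_cons u_in orbT.
congr addn; case: (posnP vz.2) => [z0|z_gt0].
  by rewrite z0 mul0n; elim: (iota _ _) => //= j r ->; rewrite big_ord0.
have [/= -> HX] := agr_step _ (step_in _ (mem_head _ _) z_gt0).
rewrite /offspring_total !sumnE !big_map big_distrr /=; apply: eq_bigr => j _.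
rewrite (eq_bigr (fun=> xcomp x1 j)) ?sum_nat_const ?card_ord // => i _.
by rewrite HX ?size_nseq // nth_nseq ltn_ord codomK.
Qed.

Lemma prob_piece_next n m E i : determined n E -> (forall w, E w -> Z n w = m) ->
  ((step_prob x1 ^+ m)%:E * P (history_piece n E i) <=
   P (history_piece n E i `&` [set w | Z n.+1 w = (m * offspring_total x1)%N]))%E.
Proof.
move=> detE Em; have [->|[w0 Ew0 ->]] := history_pieceE i detE.
  by rewrite set0I measure0 mule0.
have hist_step_uniq := uniq_history_uniform_step n w0.
have hist_uniq : uniq (map (fun e => e.1.1) (history n w0)).
  by move: hist_step_uniq; rewrite map_cat cat_uniq => /andP [].
apply: (@le_trans _ _ (P (agrees (history n w0 ++ uniform_step n w0)))).
  rewrite !prob_agrees // big_cat -EFinM lee_fin mulrC.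
  apply: ler_wpM2l; first by apply: prodr_ge0 => e _; apply: record_prob_ge0.
  rewrite prod_record_prob_uniform_step -(Em _ Ew0) /calZ.
  by apply: prod_pos_ge_expr_sumn; rewrite ?fine_ge0 ?fine_probability_le1 //; apply: N_X_meas.1.
apply: le_measure; rewrite ?inE.
- exact: measurable_agrees.
- by apply: measurableI; [apply: measurable_agrees | apply: measurable_calZ_eq].
- move=> w agr; split; first by move: agr; rewrite agrees_cat => -[].
  by rewrite /= (calZ_uniform_step agr) (Em _ Ew0).
Qed.

Lemma prob_next_ge n m E : determined n E -> (forall w, E w -> Z n w = m) ->
  ((step_prob x1 ^+ m)%:E * P E <=
   P (E `&` [set w | Z n.+1 w = (m * offspring_total x1)%N]))%E.
Proof.
move=> detE Em; rewrite (history_piece_bigcup n E) setI_bigcupl.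
apply: le_measure_bigcup_scale => [|i|i|||i]; rewrite ?lee_fin ?exprn_ge0 ?step_prob_ge0 //.
- exact: measurable_history_piece.
- by apply: measurableI; [apply: measurable_history_piece | apply: measurable_calZ_eq].
- exact: trivIset_history_piece.
- by apply: trivIset_setIr; apply: trivIset_history_piece.
- exact: prob_piece_next.
Qed.

End UniformStep.

Definition recurrent m : set T := [set w | infinitely_often (fun n => Z n w = m)].

Definition jump_after m S n0 : set T :=
  \bigcup_k [set w | Z (n0 + k) w = m /\ Z (n0 + k).+1 w = (m * S)%N].

Definition first_hit m n0 k : set T :=
  [set w | Z (n0 + k) w = m /\ forall j, (j < k)%N -> Z (n0 + j) w <> m].

Definition sterile : set T := [set w | exists n vz i,
  [/\ vz \in G n w, (i < vz.2)%N & X (N vz.1 w) i vz.1 w = [ffun => 0%N]]].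

Lemma measurable_recurrent m : measurable (recurrent m).
Proof.
rewrite (_ : recurrent m = \bigcap_n0 \bigcup_k [set w | Z (n0 + k) w = m]).
  by apply: bigcapT_measurable => n0; apply: bigcupT_measurable => k; apply: measurable_calZ_eq.
apply/seteqP; split=> [w rec_w n0 _|w rec_w n0].
  by have [n /subnKC <- Zn] := rec_w n0; exists (n - n0)%N.
by have [k _ Zk] := rec_w n0 I; exists (n0 + k)%N; rewrite ?leq_addr.
Qed.

Lemma measurable_jump_after m S n0 : measurable (jump_after m S n0).
Proof.
apply: bigcupT_measurable => k.
apply: (measurable_calZ (n := (n0 + k).+1)
  (Q := fun u => u (n0 + k) = m /\ u (n0 + k).+1 = (m * S)%N)).
by move=> u v uv; rewrite !uv ?leqnSn.
Qed.

Lemma jump_after_nonincreasing m S : nonincreasing_seq (jump_after m S).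
Proof.
move=> i j le_ij; apply/subsetPset => w [k _ jump].
by exists (j - i + k)%N => //; rewrite addnA subnKC.
Qed.

Lemma determined_first_hit m n0 k : determined (n0 + k) (first_hit m n0 k).
Proof.
move=> w w0 hw [Zk not_before]; split; first by rewrite (calZ_history hw).
move=> j lt_jk; rewrite (calZ_history hw); first exact: not_before.
by rewrite leq_add2l ltnW.
Qed.

Lemma recurrent_sub_first_hit m n0 : recurrent m `<=` \bigcup_k first_hit m n0 k.
Proof.
move=> w rec_w; have [n le_n Zn] := rec_w n0.
have hit : exists k, Z (n0 + k) w == m by exists (n - n0)%N; rewrite subnKC // Zn.
case: (ex_minnP hit) => k /eqP Zk k_min; exists k => //; split => // j lt_jk /eqP Zj.
by have := k_min j Zj; rewrite leqNgt lt_jk.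
Qed.

Lemma trivIset_first_hit m n0 : trivIset setT (first_hit m n0).
Proof.
move=> i j _ _ [w [[Zi before_i] [Zj before_j]]].
by case: (ltngtP i j) => // lt; [case: (before_j _ lt) | case: (before_i _ lt)].
Qed.

Lemma prob_jump_after_ge k1 (x1 : {ffun 'I_k1 -> nat}) m n0 :
  ((step_prob x1 ^+ m)%:E * P (recurrent m) <=
   P (jump_after m (offspring_total x1) n0))%E.
Proof.
have c_ge0 : 0 <= step_prob x1 ^+ m by rewrite exprn_ge0 ?step_prob_ge0.
have mhit k : measurable (first_hit m n0 k).
  by apply: measurable_determined; apply: determined_first_hit.
apply: (@le_trans _ _ ((step_prob x1 ^+ m)%:E * P (\bigcup_k first_hit m n0 k))%E).
  rewrite lee_wpmul2l ?lee_fin //; apply: le_measure; rewrite ?inE.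
  - exact: measurable_recurrent.
  - exact: bigcupT_measurable.
  - exact: recurrent_sub_first_hit.
pose next k := [set w | Z (n0 + k).+1 w = (m * offspring_total x1)%N].
apply: (@le_trans _ _ (P (\bigcup_k (first_hit m n0 k `&` next k)))).
  apply: le_measure_bigcup_scale => // [k|||k].
  - by apply: measurableI => //; apply: measurable_calZ_eq.
  - exact: trivIset_first_hit.
  - by apply: trivIset_setIr; apply: trivIset_first_hit.
  - apply: prob_next_ge; first exact: determined_first_hit.
    by move=> w [].
apply: le_measure; rewrite ?inE.
- by apply: bigcupT_measurable => k; apply: measurableI => //; apply: measurable_calZ_eq.
- exact: measurable_jump_after.
- by move=> w [k _ [[Zk _] Zk1]]; exists k.
Qed.

Lemma recurrent_null_of_jump k1 (x1 : {ffun 'I_k1 -> nat}) m :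
  0 < step_prob x1 ->
  P (\bigcap_n0 jump_after m (offspring_total x1) n0) = 0%E -> P (recurrent m) = 0%E.
Proof.
move=> step_gt0 jump0.
have cvg_jump : (P \o jump_after m (offspring_total x1)) @ \oo -->
    P (\bigcap_n0 jump_after m (offspring_total x1) n0).
  apply: nonincreasing_cvg_mu.
  - by rewrite (le_lt_trans (probability_le1 P (measurable_jump_after _ _ _))) ?ltry.
  - by move=> n0; apply: measurable_jump_after.
  - by apply: bigcapT_measurable => n0; apply: measurable_jump_after.
  - exact: jump_after_nonincreasing.
have : ((step_prob x1 ^+ m)%:E * P (recurrent m) <=
    lim ((P \o jump_after m (offspring_total x1)) @ \oo))%E.
  apply: lime_ge; first exact: cvgP cvg_jump.
  by apply: nearW => n0; apply: prob_jump_after_ge.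
rewrite (cvg_lim _ cvg_jump) // jump0 pmule_rle0 ?lte_fin ?exprn_gt0 //.
by move=> le0; apply/eqP; rewrite eq_le le0 measure_ge0.
Qed.

Lemma bigcap_jump_after0 m : (0 < m)%N -> \bigcap_n0 jump_after m 0 n0 = set0.
Proof.
move=> m_gt0; apply/seteqP; split => // w jumps.
have [k _ [_]] := jumps 0%N I; rewrite muln0 => Z0.
have [n0 Z_eq0] : tends_to_zero (Z^~ w).
  by apply/(absorbed_tends_to_zero (calZ_absorbed (w := w))); exists (0 + k).+1%N.
have [j _ [Zj _]] := jumps n0 I.
by move: m_gt0; rewrite -Zj Z_eq0 ?leq_addr.
Qed.

Lemma bigcap_jump_after_sterile m S : (0 < m)%N -> (2 <= S)%N ->
  \bigcap_n0 jump_after m S n0 `<=` sterile.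
Proof.
move=> m_gt0 S_ge2 w jumps; apply: contrapT => not_sterile.
have Z_leS n : (Z n w <= Z n.+1 w)%N.
  apply: calZ_leS => vz vz_in i lt_i; apply/eqP => X0.
  by apply: not_sterile; exists n, vz, i.
have [k _ [_ ZkS]] := jumps 0%N I.
have [j _ [Zj _]] := jumps (0 + k).+1%N I.
have : (Z (0 + k).+1 w <= Z ((0 + k).+1 + j) w)%N.
  elim: j {Zj} => [|j IH]; rewrite ?addn0 // addnS; exact: leq_trans IH (Z_leS _).
rewrite ZkS Zj; have : (m * 2 <= m * S)%N by rewrite leq_mul2l S_ge2 orbT.
lia.
Qed.

Lemma negligible_sterile :
  (forall k, step_prob ([ffun => 0%N] : {ffun 'I_k -> nat}) = 0) ->
  P.-negligible sterile.
Proof.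
move=> no_zero_vector.
pose B (t : seq nat * nat * nat) : set T :=
  [set w | N t.1.1 w = t.2 /\ X t.2 t.1.2 t.1.1 w = [ffun => 0%N]].
apply: (negligibleS (A := \bigcup_t B t)).
  by move=> w [n [vz [i [_ _ X0]]]]; exists (vz.1, i, N vz.1 w).
apply: negligible_bigcup_countable => t.
suff PB : P (B t) = 0%E.
  by apply/negligibleP => //; apply: measurableI; [apply: N_X_meas.1 | apply: N_X_meas.2].
pose a (_ : seq nat) := t.2.
pose b k (_ : nat) (_ : seq nat) : {ffun 'I_k -> nat} := [ffun => 0%N].
have -> : B t = [set w | all (fun v => N v w == a v) [:: t.1.1] &&
    all (fun u => X u.1.1 u.1.2 u.2 w == b u.1.1 u.1.2 u.2) [:: (t.2, t.1.2, t.1.1)]].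
  apply/seteqP; split=> w /=; rewrite !andbT; first by move=> [-> ->]; rewrite !eqxx.
  by move=> /andP [/eqP ? /eqP ?]; split.
rewrite (N_X_indep a b) // !big_seq1 /= N_X_ident.1 N_X_ident.2.
by have := no_zero_vector t.2; rewrite /step_prob => ->.
Qed.

Lemma exists_branching_step k j : (j < k)%N ->
  (0 < pk P N k * P [set w | (2 <= xcomp (X k 0%N [::] w) j)%N])%E ->
  exists2 x1 : {ffun 'I_k -> nat}, (2 <= offspring_total x1)%N & 0 < step_prob x1.
Proof.
move=> lt_jk; rewrite mule_ge0_gt0 // => /andP [pk_gt0].
move=> /(exists_atom_gt0 (Q := fun x => 2 <= xcomp x j)%N (N_X_meas.2 k 0%N [::])).
move=> -[x1 two_le x1_gt0]; exists x1.
  by apply: leq_trans two_le (leq_mem_sumn _); apply: map_f; rewrite mem_iota.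
by rewrite mulr_gt0 // fine_probability_gt0 //; [apply: N_X_meas.1 | apply: N_X_meas.2].
Qed.

Lemma recurrent_null m : bwbp_standing P N X -> (0 < m)%N -> P (recurrent m) = 0%E.
Proof.
move=> [_ _ _ _ [k [j [lt_jk branching]]]] m_gt0.
have [[k0 zero_gt0]|/forallNP no_zero] :=
  pselect (exists k0, 0 < step_prob ([ffun => 0%N] : {ffun 'I_k0 -> nat})).
  apply: (recurrent_null_of_jump zero_gt0).
  by rewrite offspring_total0 bigcap_jump_after0 ?measure0.
have zero0 k0 : step_prob ([ffun => 0%N] : {ffun 'I_k0 -> nat}) = 0.
  by apply/eqP; rewrite eq_le step_prob_ge0 andbT leNgt; apply/negP; apply: no_zero.
have [x1 two_le x1_gt0] := exists_branching_step lt_jk branching.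
apply: (recurrent_null_of_jump x1_gt0); apply: measure_negligible.
  by apply: bigcapT_measurable => n0; apply: measurable_jump_after.
exact: negligibleS (bigcap_jump_after_sterile m_gt0 two_le) (negligible_sterile zero0).
Qed.

Definition extinct : set T := [set w | tends_to_zero (fun n => Z n w)].
Definition explode : set T := [set w | tends_to_infty (fun n => Z n w)].

Lemma extinct_bigcup : extinct = \bigcup_n [set w | Z n w = 0%N].
Proof.
apply/seteqP; split=> w; rewrite /extinct /= (absorbed_tends_to_zero (calZ_absorbed (w := w))).
  by case=> n Zn; exists n.
by case=> n _ Zn; exists n.
Qed.

Lemma measurable_extinct : measurable extinct.
Proof.
by rewrite extinct_bigcup; apply: bigcupT_measurable => n; apply: measurable_calZ_eq.
Qed.

Lemma measurable_explode : measurable explode.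
Proof.
rewrite (_ : explode = \bigcap_M \bigcup_n0 \bigcap_k [set w | (M <= Z (n0 + k) w)%N]).
  apply: bigcapT_measurable => M; apply: bigcupT_measurable => n0.
  apply: bigcapT_measurable => k.
  by apply: (measurable_calZ (Q := fun u => M <= u (n0 + k))%N) => u v uv; rewrite uv.
apply/seteqP; split=> [w Zw M _|w Zw M].
  by have [n0 Zn0] := Zw M; exists n0 => // k _; apply: Zn0; rewrite leq_addr.
by have [n0 _ Zn0] := Zw M I; exists n0 => n /subnKC <-; apply: Zn0.
Qed.

Lemma extinct_explode_disjoint : extinct `&` explode = set0.
Proof.
apply/seteqP; split=> // w [[n0 Z0] Zinf]; have [n1 Z1] := Zinf 1%N.
by have := Z1 (maxn n0 n1) (leq_maxr _ _); rewrite Z0 // leq_maxl.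
Qed.

Lemma not_extinct_explode_recurrent : ~` (extinct `|` explode) `<=` \bigcup_m recurrent m.+1.
Proof.
move=> w /not_orP [not0 notinf].
have [m rec_m] := recurrent_of_not_tends (calZ_absorbed (w := w)) not0 notinf.
by exists m.
Qed.

Lemma extinction_explosion : bwbp_standing P N X -> (P extinct + P explode = 1)%E.
Proof.
move=> standing; apply: probability_disjointU_eq1.
- exact: measurable_extinct.
- exact: measurable_explode.
- exact: extinct_explode_disjoint.
apply: measure_negligible.
  by apply/measurableC/measurableU; [apply: measurable_extinct | apply: measurable_explode].
apply: negligibleS not_extinct_explode_recurrent _.
apply: negligible_bigcup => m; apply/negligibleP; first exact: measurable_recurrent.
exact: recurrent_null.
Qed.

End BranchingWithinBranching.

Unset Implicit Arguments.

Theorem theorem1 (d : measure_display) (T : measurableType d) (R : realType)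
  (P : probability T R) (N : seq nat -> T -> nat)
  (X : forall k : nat, nat -> seq nat -> T -> {ffun 'I_k -> nat}) :
  bwbp_measurable N X ->
  bwbp_independent P N X ->
  bwbp_identically_distributed P N X ->
  bwbp_standing P N X ->
  forall s : seq nat,
    (P [set w | tends_to_zero (fun n => calZ N X s n w)] +
     P [set w | tends_to_infty (fun n => calZ N X s n w)] = 1)%E.
Proof.
move=> N_X_meas N_X_indep N_X_ident standing s.
exact: extinction_explosion.
Qed.
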